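(* Let $S_A>0$, $c_{\mathrm{TX}}>0$, $\phi>0$, $\theta=\phi/c_{\mathrm{TX}}$, let $B\geq 1$ be an integer, and let $\lambda$ satisfy $$0<\lambda\leq \lambda_{\mathrm{th}}\triangleq\frac{1}{\left(\sqrt{1+1/S_A}+\sqrt{\theta}\right)^2}.$$ Define $v_{\mathrm{th}}(\lambda,-1)\triangleq 0$, $t^*\triangleq\left\lceil\sqrt{\frac{1}{\lambda S_A}+\frac{1}{4}}-\frac{3}{2}\right\rceil$, and for integers $0\leq t\leq t^*$, $$v_{\mathrm{th}}(\lambda,t)\triangleq \frac{\sqrt{\lambda\theta}+\lambda\left(t+\frac{1}{2}\right)}{1-\lambda (t+1)tS_A}+\frac{\sqrt{\lambda}\sqrt{\sqrt{\lambda\theta}(2t+1)+\lambda \theta(t+1)tS_A+\frac{\lambda}{4}+\frac{1}{S_A}}}{1-\lambda(t+1)tS_A}.$$ Let $V_k\in(0,1]$ and let $(t^{(MP)}(V_k),S_M^{(MP)}(V_k))$ denote the myopic policy, i.e. a (possibly randomized among minimizers) minimizer over $t\in\{0,1,\dots,B\}$, $S_M\geq 0$ of $$F(t,S_M)=\hat\nu\left(V_k,\frac{tS_AS_M}{S_A+S_M}\right)+\lambda t(1+\theta S_M),\qquad \hat\nu(V,\Lambda)=\frac{V}{1+V\Lambda}.$$ Then: (i) if $V_k>v_{\mathrm{th}}(\lambda,t^* )$, then $t^{(MP)}(V_k)=\min\{t^*+1,B\}$; (ii) if $V_k=v_{\mathrm{th}}(\lambda,\hat t)$ for some $\hat t\in\{0,1,\dots,t^*\}$,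 then $t^{(MP)}(V_k)=\min\{\hat t+1,B\}$ with probability $p_{\hat t}$ and $t^{(MP)}(V_k)=\min\{\hat t,B\}$ otherwise, for some $p_{\hat t}\in[0,1]$ (both values minimize $F$); (iii) otherwise, $t^{(MP)}(V_k)=\min\{\hat t,B\}$, where $\hat t$ is the unique element of $\{0,1,\dots,t^*\}$ with $v_{\mathrm{th}}(\lambda,\hat t-1)<V_k<v_{\mathrm{th}}(\lambda,\hat t)$; (iv) in all cases, $$S_M^{(MP)}(V_k)=\left(\frac{1}{\sqrt{\lambda\theta}}-\frac{1}{V_k}\right)^+\frac{S_AV_k}{1+t^{(MP)}(V_k)S_AV_k}.$$
   Context: Model: a fusion center estimates a scalar Gaussian process; $V_k$ is the prior variance of the state at slot $k$. In the coordinated scheme (all sensors in the best accuracy state), the fusion center activates $t$ sensors, each measuring with local measurement SNR $S_M$; the aggregate SNR collected is $tS_AS_M/(S_A+S_M)$, where $S_A$ is the ambient SNR; the resulting posterior variance is $\hat\nu(V_k,\Lambda)=V_k/(1+V_k\Lambda)$. Each active sensor incurs cost $c_{\mathrm{TX}}+\phi S_M$; $\lambda\geq 0$ is a Lagrange multiplier, and the normalized cost of $t$ active sensors is $\lambda t(1+\theta S_M)$. $(x)^+=\max\{x,0\}$ and $\lceil\cdot\rceil$ is the ceiling. *)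

From HB Require Import structures.
From mathcomp Require Import all_boot all_order all_algebra.
From mathcomp Require Import reals.
Set Implicit Arguments. Unset Strict Implicit. Unset Printing Implicit Defensive.
Import Order.TTheory GRing.Theory Num.Theory.
Local Open Scope ring_scope.

Section Defs.
Variable R : realType.

Definition nuhat (V Lam : R) : R := V / (1 + V * Lam).

Definition aggSNR (SA : R) (t : nat) (s : R) : R := t%:R * SA * s / (SA + s).

Definition Fobj (lam theta SA V : R) (t : nat) (s : R) : R :=
  nuhat V (aggSNR SA t s) + lam * t%:R * (1 + theta * s).

Definition is_myopic_min (lam theta SA V : R) (B : nat) (t : nat) (s : R) : Prop :=
  (t <= B)%N /\ 0 <= s /\
  forall (t' : nat) (s' : R), (t' <= B)%N -> 0 <= s' ->
    Fobj lam theta SA V t s <= Fobj lam theta SA V t' s'.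

Definition lam_th (theta SA : R) : R :=
  1 / (Num.sqrt (1 + 1 / SA) + Num.sqrt theta) ^+ 2.

Definition tstar (lam SA : R) : int :=
  Num.ceil (Num.sqrt (1 / (lam * SA) + 1 / 4) - 3 / 2).

Definition vth (lam theta SA : R) (t : int) : R :=
  if t < 0 then 0 else
  let tr : R := t%:~R in
  let den := 1 - lam * (tr + 1) * tr * SA in
  (Num.sqrt (lam * theta) + lam * (tr + 1 / 2)) / den
  + Num.sqrt lam *
      Num.sqrt (Num.sqrt (lam * theta) * (2 * tr + 1)
                + lam * theta * (tr + 1) * tr * SA + lam / 4 + 1 / SA) / den.

Definition SMopt (lam theta SA V : R) (t : nat) : R :=
  Num.max 0 (1 / Num.sqrt (lam * theta) - 1 / V) * (SA * V / (1 + t%:R * SA * V)).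

(* The set of myopic decisions is exactly {(t, SMopt t) : T t}, up to the
   fact that for t = 0 the value of S_M is irrelevant to F. *)
Definition myopic_char (lam theta SA V : R) (B : nat) (T : nat -> Prop) : Prop :=
  (forall (t : nat) (s : R), is_myopic_min lam theta SA V B t s ->
      T t /\ (t <> 0%N -> s = SMopt lam theta SA V t)) /\
  (forall t : nat, T t -> is_myopic_min lam theta SA V B t (SMopt lam theta SA V t)).

End Defs.

(* Write theta = k^2/lam, so that k = sqrt(lam theta).  For fixed t, F(t, .) is minimised by
   completing the square: its minimum Fmin t is attained exactly at S_M^(MP) (anywhere when t = 0).
   The marginal gain Fmin t - Fmin (t+1) of one more sensor is -lam when V < k and
   (V-k)^2 S_A / ((1 + t S_A V)(1 + (t+1) S_A V)) - lam otherwise, so it is nonincreasing in t,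
   strictly when V > k.  It is negative beyond t^*, where lam t (t+1) S_A >= 1, and for t <= t^*
   clearing denominators turns it into a quadratic in V whose larger root is v_th(lam, t) and whose
   smaller root lies below k; hence its sign is that of V - v_th(lam, t).  Thus Fmin decreases
   strictly up to the first t with a negative gain and increases strictly afterwards, with one flat
   step when some gain vanishes, and its minimisers over {0, ..., B} are read off from the position
   of V among the thresholds. *)

From HB Require Import structures.
From mathcomp Require Import all_boot all_order all_algebra.
From mathcomp Require Import reals.
From mathcomp Require Import zify ring lra.
Set Implicit Arguments. Unset Strict Implicit. Unset Printing Implicit Defensive.
Import Order.TTheory GRing.Theory Num.Theory.
Local Open Scope ring_scope.

Definition argmin_upto (R : realDomainType) (G : nat -> R) (B t : nat) : Prop :=
  (t <= B)%N /\ forall t', (t' <= B)%N -> G t <= G t'.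

Section Valley.
Variables (R : realDomainType) (G : nat -> R) (a b B : nat).
Hypotheses (le_ab : (a <= b)%N)
  (G_dec : forall i, (i < a)%N -> G i.+1 < G i)
  (G_flat : forall i, (a <= i < b)%N -> G i.+1 = G i)
  (G_inc : forall i, (b <= i)%N -> G i < G i.+1).

Let m := minn a B.
Let M := minn b B.

Lemma valley_left t : (t < m)%N -> G m < G t.
Proof.
move=> lt_tm.
have le_a : {in [pred i | i <= a]%N &, forall i j, (i < j)%N -> G j < G i}.
  apply: (homo_ltn_in (r := fun x y => y < x)) => [y x z /= ? ?||i].
  - exact: (@lt_trans _ _ y).
  - by move=> i j /[!inE] ? ? k; rewrite inE; lia.
  - by rewrite !inE => _; exact: G_dec.
by apply: le_a; rewrite ?inE //; lia.
Qed.

Lemma valley_floor t : (m <= t <= M)%N -> G t = G m.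
Proof.
rewrite /m /M; case: (leqP a B) => [le_aB|lt_Ba] mtM; last by have -> : t = B by lia.
elim: t mtM => [|t IH]; first by case/andP; rewrite leqn0 => /eqP ->.
rewrite leq_eqVlt => /andP[/orP[/eqP <- //|le_at le_tM]].
by rewrite G_flat ?IH //; lia.
Qed.

Lemma valley_right t : (M < t <= B)%N -> G m < G t.
Proof.
move=> tB.
have lt_bB : (b < B)%N by rewrite /M in tB; lia.
have -> : G m = G b by rewrite -(@valley_floor b) // /m /M; lia.
have ge_b : {in [pred i | b <= i]%N &, forall i j, (i < j)%N -> G i < G j}.
  apply: (homo_ltn_in (r := fun x y => x < y)) => [y x z /=||i].
  - exact: lt_trans.
  - by move=> i j /[!inE] ? ? k; rewrite inE; lia.
  - by rewrite !inE => + _; exact: G_inc.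
by apply: ge_b; rewrite ?inE //; rewrite /M in tB; lia.
Qed.

Lemma argmin_upto_valley t : argmin_upto G B t <-> (minn a B <= t <= minn b B)%N.
Proof.
split=> [[le_tB G_min]|mtM].
  have G_m : G t <= G m by rewrite G_min // /m geq_minr.
  rewrite -/m -/M; apply/andP; split; rewrite leqNgt; apply/negP.
    by move=> /valley_left; rewrite ltNge G_m.
  by move=> lt_Mt; have := @valley_right t; rewrite lt_Mt le_tB ltNge G_m => /(_ isT).
split; first by rewrite /M in mtM; lia.
move=> t' le_t'B; rewrite (@valley_floor t mtM).
case: (ltnP t' m) => [/valley_left/ltW //|le_mt'].
case: (leqP t' M) => [le_t'M|lt_Mt']; first by rewrite (@valley_floor t') ?le_mt'.
by apply/ltW/valley_right; rewrite lt_Mt'.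
Qed.

End Valley.

Lemma le_tstar (R : realType) (lam SA : R) (t : nat) : 0 < lam -> 0 < SA ->
  (t%:Z <= tstar lam SA) = (lam * (t%:R + 1) * t%:R * SA < 1).
Proof.
move=> lam_gt0 SA_gt0.
have lamSA_gt0 : 0 < lam * SA by rewrite mulr_gt0.
rewrite /tstar -ltzD1 -ltrBlDr ceil_gt_int intrB /=.
set s := Num.sqrt _.
rewrite pmulrn mulr1z.
have -> : (t%:R - 1 < s - 3 / 2) = (t%:R + 1 / 2 < s).
  by rewrite -subr_gt0 -[RHS]subr_gt0 (_ : s - 3 / 2 - (t%:R - 1) = s - (t%:R + 1 / 2)) //; field.
rewrite -[X in X < _]ger0_norm ?addr_ge0 ?divr_ge0 // -sqrtr_sqr ltr_sqrt; last first.
  by rewrite addr_gt0 ?divr_gt0.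
rewrite -subr_gt0 -[X in _ = X]subr_gt0.
have -> : 1 / (lam * SA) + 1 / 4 - (t%:R + 1 / 2) ^+ 2 =
          (1 - lam * (t%:R + 1) * t%:R * SA) / (lam * SA).
  by field; rewrite !gt_eqF.
by rewrite pmulr_lgt0 ?invr_gt0.
Qed.

Lemma tstar_ge0 (R : realType) (lam SA : R) : 0 < lam -> 0 < SA -> 0 <= tstar lam SA.
Proof. by move=> lam_gt0 SA_gt0; rewrite (@le_tstar _ _ _ 0) // mulr0 mul0r ltr01. Qed.

Lemma vth_pred (R : realType) (lam theta SA : R) (th : nat) :
  vth lam theta SA (th%:Z - 1) = if th is s.+1 then vth lam theta SA s%:Z else 0.
Proof. by case: th => // s; rewrite intS addrC addKr. Qed.

Section Myopic.
Variables (R : realType) (lam SA k V : R).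
Hypotheses (lam_gt0 : 0 < lam) (SA_gt0 : 0 < SA) (k_gt0 : 0 < k) (V_gt0 : 0 < V).

Local Notation theta := (k ^+ 2 / lam).
Local Notation c t := (1 + t%:R * SA * V).
Local Notation v t := (vth lam theta SA t%:Z).
(* v t = (qb t + qr t) / qa t is the larger root of qa t * y^2 - 2 qb t * y + qc, as
   qr t ^ 2 = qb t ^ 2 - qa t * qc. *)
Local Notation qa t := (1 - lam * (t%:R + 1) * t%:R * SA).
Local Notation qb t := (k + lam * (t%:R + 1 / 2)).
Local Notation qc := (k ^+ 2 - lam / SA).
Local Notation qr t := (Num.sqrt lam * Num.sqrt (k * (2 * t%:R + 1)
  + k ^+ 2 * (t%:R + 1) * t%:R * SA + lam / 4 + 1 / SA)).

Let lam_ge0 : 0 <= lam := ltW lam_gt0.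
Let SA_ge0 : 0 <= SA := ltW SA_gt0.
Let V_ge0 : 0 <= V := ltW V_gt0.
Let k_ge0 : 0 <= k := ltW k_gt0.

Let c_gt0 (t : nat) : 0 < c t.
Proof. by rewrite ltr_pwDl // !mulr_ge0 // ltW. Qed.

Let c_lt (i j : nat) : (i < j)%N -> c i < c j.
Proof. by move=> lt_ij; rewrite ltrD2l !ltr_pM2r // ltr_nat. Qed.

Let c_prod_lt (t : nat) : c t * c t.+1 < c t.+1 * c t.+2.
Proof. by rewrite mulrC ltr_pM2l ?c_lt. Qed.

Let lam_theta : lam * theta = k ^+ 2.
Proof. by rewrite mulrC divfK ?gt_eqF. Qed.

Let sqrt_lam_theta : Num.sqrt (lam * theta) = k.
Proof. by rewrite lam_theta sqrtr_sqr gtr0_norm. Qed.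

Definition Fmin (t : nat) : R :=
  if k <= V then 2 * k - k ^+ 2 / V + (V - k) ^+ 2 / (V * c t) + lam * t%:R
  else V + lam * t%:R.

Lemma SMoptE (t : nat) :
  SMopt lam theta SA V t = if k <= V then (V - k) * SA / (k * c t) else 0.
Proof.
rewrite /SMopt sqrt_lam_theta.
have -> : 1 / k - 1 / V = (V - k) / (k * V) by field; rewrite !gt_eqF.
case: ifP => [le_kV|/negbT]; last first.
  by rewrite -ltNge -subr_lt0 => lt_Vk; rewrite max_l ?mul0r // ltW ?pmulr_llt0 ?invr_gt0 ?mulr_gt0.
rewrite max_r; last by rewrite divr_ge0 ?subr_ge0 // mulr_ge0 ?ltW.
by field; rewrite !gt_eqF.
Qed.

Lemma SMopt_ge0 (t : nat) : 0 <= SMopt lam theta SA V t.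
Proof.
rewrite SMoptE; case: ifP => // le_kV.
by rewrite divr_ge0 ?mulr_ge0 ?subr_ge0 // ltW.
Qed.

Lemma Fobj_excess (t : nat) (s : R) : 0 <= s ->
  exists2 e, 0 <= e &
    Fobj lam theta SA V t s = Fmin t + t%:R * e /\
    (e = 0 <-> s = SMopt lam theta SA V t).
Proof.
move=> s_ge0; set w := SA + s * c t.
have w_gt0 : 0 < w by rewrite ltr_wpDr // mulr_ge0 // ltW.
have FobjE : Fobj lam theta SA V t s =
    V * (SA + s) / w + k ^+ 2 * t%:R * s + lam * t%:R.
  have SAs_gt0 : 0 < SA + s by rewrite ltr_wpDr.
  rewrite /Fobj /nuhat /aggSNR.
  have -> : 1 + V * (t%:R * SA * s / (SA + s)) = w / (SA + s).
    by rewrite /w; field; rewrite gt_eqF.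
  by field; rewrite !gt_eqF.
rewrite FobjE SMoptE /Fmin; case: ifP => [le_kV|/negbT]; last first.
  rewrite -ltNge => lt_Vk.
  have pos : 0 < (k ^+ 2 * w - SA * V ^+ 2) / w.
    have V2_lt : V ^+ 2 < k ^+ 2 by rewrite !expr2 ltr_pM ?ltW.
    have h1 := mulr_ge0 (mulr_ge0 s_ge0 (ltW (c_gt0 t))) (sqr_ge0 k).
    have h2 : 0 < SA * (k ^+ 2 - V ^+ 2) by rewrite mulr_gt0 // subr_gt0.
    by rewrite divr_gt0 // subr_gt0 /w; lra.
  exists (s * ((k ^+ 2 * w - SA * V ^+ 2) / w)); first by rewrite mulr_ge0 // ltW.
  split; first by rewrite /w; field; rewrite gt_eqF.
  by split=> [/eqP|->]; rewrite ?mul0r // mulf_eq0 (gt_eqF pos) orbF => /eqP.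
pose s0 := (V - k) * SA / (k * c t).
exists ((k * c t * (s0 - s)) ^+ 2 / (w * c t)).
  by rewrite divr_ge0 ?sqr_ge0 ?mulr_ge0 ?ltW.
split; first by rewrite /w /s0; field; rewrite !gt_eqF.
split=> [/eqP|->]; last by rewrite subrr mulr0 expr0n mul0r.
rewrite mulf_eq0 invr_eq0 (gt_eqF (mulr_gt0 w_gt0 (c_gt0 t))) orbF sqrf_eq0.
by rewrite !mulf_eq0 (gt_eqF k_gt0) (gt_eqF (c_gt0 t)) subr_eq0 => /eqP <-.
Qed.

Lemma Fmin_le_Fobj (t : nat) (s : R) : 0 <= s -> Fmin t <= Fobj lam theta SA V t s.
Proof.
move=> /(Fobj_excess t) [e e_ge0 [-> _]].
by rewrite lerDl mulr_ge0.
Qed.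

Lemma Fobj_SMopt (t : nat) : Fobj lam theta SA V t (SMopt lam theta SA V t) = Fmin t.
Proof.
have [e _ [-> /iffRL ->]] := Fobj_excess t (SMopt_ge0 t) => //.
by rewrite mulr0 addr0.
Qed.

Lemma Fobj_eq_Fmin (t : nat) (s : R) : 0 <= s -> t <> 0%N ->
  Fobj lam theta SA V t s = Fmin t -> s = SMopt lam theta SA V t.
Proof.
move=> /(Fobj_excess t) [e _ [-> /iffLR e0]] t_neq0 /eqP.
by rewrite addrC -subr_eq0 addrK mulf_eq0 pnatr_eq0 => /orP[/eqP/t_neq0|/eqP/e0].
Qed.

Lemma myopic_char_argmin (B : nat) (T : nat -> Prop) :
  (forall t, argmin_upto Fmin B t <-> T t) -> myopic_char lam theta SA V B T.
Proof.
move=> TE; split=> [t s [le_tB [s_ge0 F_min]]|t /TE [le_tB G_min]].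
  have F_le_G : Fobj lam theta SA V t s <= Fmin t by rewrite -Fobj_SMopt F_min ?SMopt_ge0.
  split.
    apply/TE; split=> // t' le_t'B.
    by rewrite (le_trans (Fmin_le_Fobj t s_ge0)) // -Fobj_SMopt F_min ?SMopt_ge0.
  move=> t_neq0; apply: Fobj_eq_Fmin => //.
  by apply/eqP; rewrite eq_le F_le_G Fmin_le_Fobj.
split=> //; split; first exact: SMopt_ge0.
move=> t' s' le_t'B s'_ge0.
by rewrite Fobj_SMopt (le_trans (G_min t' le_t'B)) // Fmin_le_Fobj.
Qed.

Definition gain (t : nat) : R := Fmin t - Fmin t.+1.

Lemma gainE (t : nat) :
  gain t = if k <= V then (V - k) ^+ 2 * SA / (c t * c t.+1) - lam else - lam.
Proof.
have ct1_gt0 := c_gt0 t.+1.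
rewrite /gain /Fmin -natr1 in ct1_gt0 *; case: ifP => _; last by ring.
by field; rewrite !gt_eqF //; lra.
Qed.

Lemma gain_succ_le (t : nat) : gain t.+1 <= gain t.
Proof.
rewrite !gainE; case: ifP => // _.
rewrite lerD2r ler_wpM2l ?(mulr_ge0 (sqr_ge0 _) SA_ge0) // ltW //.
by rewrite ltf_pV2 ?posrE ?mulr_gt0 // c_prod_lt.
Qed.

Lemma gain_succ_lt (t : nat) : k < V -> gain t.+1 < gain t.
Proof.
move=> lt_kV; rewrite !gainE ltW //.
rewrite ltrD2r ltr_pM2l ?mulr_gt0 ?exprn_gt0 ?subr_gt0 //.
by rewrite ltf_pV2 ?posrE ?mulr_gt0 // c_prod_lt.
Qed.

Lemma gain_nonincr (i j : nat) : (i <= j)%N -> gain j <= gain i.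
Proof.
apply: (homo_leq (r := fun x y => y <= x)) => [x|y x z /= ? ?|t] //.
  exact: (@le_trans _ _ y).
exact: gain_succ_le.
Qed.

Lemma gain_decr (i j : nat) : k < V -> (i < j)%N -> gain j < gain i.
Proof.
move=> lt_kV; apply: (homo_ltn (r := fun x y => y < x)) => [y x z /= ? ?|t].
  exact: (@lt_trans _ _ y).
exact: gain_succ_lt.
Qed.

Lemma gain_lt0_large (t : nat) : 1 <= lam * (t%:R + 1) * t%:R * SA -> gain t < 0.
Proof.
rewrite gainE; case: ifP => [le_kV large|_ _]; last by rewrite oppr_lt0.
rewrite subr_lt0 ltr_pdivrMr ?mulr_gt0 // -subr_gt0 -natr1.
have -> : lam * (c t * (1 + (t%:R + 1) * SA * V)) - (V - k) ^+ 2 * SA =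
    lam + lam * (2 * t%:R + 1) * SA * V
    + (lam * (t%:R + 1) * t%:R * SA - 1) * (SA * V ^+ 2) + SA * k * (2 * V - k).
  by ring.
have h1 : 0 <= lam * (2 * t%:R + 1) * SA * V by rewrite !mulr_ge0 // addr_ge0 ?mulr_ge0.
have h2 : 0 <= (lam * (t%:R + 1) * t%:R * SA - 1) * (SA * V ^+ 2).
  by rewrite mulr_ge0 ?subr_ge0 // mulr_ge0 ?sqr_ge0.
have h3 : 0 < SA * k * (2 * V - k) by rewrite !mulr_gt0 //; move: V_gt0; lra.
by move: lam_gt0; lra.
Qed.

Lemma vthE (t : nat) : v t = qb t / qa t + qr t / qa t.
Proof. by rewrite /vth /= sqrt_lam_theta lam_theta. Qed.

Lemma qr_sq (t : nat) : qr t ^+ 2 = qb t ^+ 2 - qa t * qc.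
Proof.
rewrite exprMn sqr_sqrtr // sqr_sqrtr; first by field; rewrite gt_eqF.
by rewrite !addr_ge0 ?mulr_ge0 ?addr_ge0 ?mulr_ge0 ?sqr_ge0 ?invr_ge0.
Qed.

Lemma quad_factor (t : nat) (y : R) : qa t != 0 ->
  qa t * y ^+ 2 - 2 * qb t * y + qc = qa t * (y - v t) * (y - (qb t - qr t) / qa t).
Proof.
move=> qa_neq0; apply/eqP; rewrite vthE -subr_eq0.
have -> : qa t * y ^+ 2 - 2 * qb t * y + qc
    - qa t * (y - (qb t / qa t + qr t / qa t)) * (y - (qb t - qr t) / qa t)
    = (qr t ^+ 2 - (qb t ^+ 2 - qa t * qc)) / qa t.
  by field; rewrite qa_neq0 gt_eqF.
by rewrite qr_sq subrr mul0r.
Qed.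

Lemma quad_at_k_lt0 (t : nat) : qa t * k ^+ 2 - 2 * qb t * k + qc < 0.
Proof.
have -> : qa t * k ^+ 2 - 2 * qb t * k + qc =
    - (lam * t%:R * (t%:R + 1) * SA * k ^+ 2 + lam * (2 * t%:R + 1) * k + lam / SA).
  by field; rewrite gt_eqF.
by rewrite oppr_lt0 ltr_wpDl ?divr_gt0 // addr_ge0 // !mulr_ge0 ?addr_ge0 ?mulr_ge0.
Qed.

Lemma vth_roots_bracket (t : nat) : 0 < qa t -> (qb t - qr t) / qa t < k < v t.
Proof.
move=> qa_gt0; have := quad_at_k_lt0 t.
rewrite quad_factor ?gt_eqF // -mulrA pmulr_rlt0 //.
have : (qb t - qr t) / qa t <= v t.
  rewrite vthE -subr_ge0 (_ : _ - _ = 2 * qr t / qa t); last by field; rewrite gt_eqF.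
  by rewrite divr_ge0 ?mulr_ge0 ?sqrtr_ge0 // ltW.
move: (v t) ((qb t - qr t) / qa t) => vp vm le_vm_vp prod_lt0.
by apply/andP; split; nra.
Qed.

Lemma gain_quadratic (t : nat) : k <= V ->
  gain t = SA * (qa t * V ^+ 2 - 2 * qb t * V + qc) / (c t * c t.+1).
Proof.
move=> le_kV; have ct1_gt0 := c_gt0 t.+1.
rewrite gainE le_kV -natr1 in ct1_gt0 *.
by field; rewrite !gt_eqF //; lra.
Qed.

Lemma gain_vth (t : nat) : 0 < qa t -> exists2 w, 0 < w & gain t = w * (V - v t).
Proof.
move=> qa_gt0; have /andP[vm_lt_k k_lt_v] := vth_roots_bracket qa_gt0.
have ct1_gt0 := c_gt0 t.+1.
case: (lerP k V) => [le_kV|lt_Vk].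
  exists (SA * qa t * (V - (qb t - qr t) / qa t) / (c t * c t.+1)).
    by rewrite divr_gt0 ?mulr_gt0 // subr_gt0 (lt_le_trans vm_lt_k).
  rewrite gain_quadratic // quad_factor ?gt_eqF //.
  by field; rewrite !gt_eqF //; move: ct1_gt0; rewrite -natr1; lra.
rewrite gainE leNgt lt_Vk /=.
have gap_gt0 : 0 < v t - V by rewrite subr_gt0 (lt_trans lt_Vk).
exists (lam / (v t - V)); first by rewrite divr_gt0.
by field; rewrite gt_eqF.
Qed.

Lemma argmin_Fmin_valley (B a b : nat) : (a <= b)%N ->
  (forall i, (i < a)%N -> 0 < gain i) -> (forall i, (a <= i < b)%N -> gain i = 0) ->
  (forall i, (b <= i)%N -> gain i < 0) ->
  forall t, argmin_upto Fmin B t <-> (minn a B <= t <= minn b B)%N.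
Proof.
move=> le_ab pos zero neg; apply: argmin_upto_valley => // i.
- by move=> /pos; rewrite subr_gt0.
- by move=> /zero /eqP; rewrite subr_eq0 eq_sym => /eqP.
- by move=> /neg; rewrite subr_lt0.
Qed.

Lemma argmin_Fmin_switch (B a : nat) :
  (forall i, (i < a)%N -> 0 < gain i) -> (forall i, (a <= i)%N -> gain i < 0) ->
  forall t, argmin_upto Fmin B t <-> t = minn a B.
Proof.
move=> pos neg t; have zero i : (a <= i < a)%N -> gain i = 0 by lia.
apply: iff_trans (argmin_Fmin_valley B (leqnn a) pos zero neg t) _.
by split=> [|->]; lia.
Qed.

Lemma argmin_Fmin_tie (B a : nat) :
  (forall i, (i < a)%N -> 0 < gain i) -> gain a = 0 -> (forall i, (a < i)%N -> gain i < 0) ->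
  forall t, argmin_upto Fmin B t <-> t = minn a.+1 B \/ t = minn a B.
Proof.
move=> pos zero_a neg t.
have zero i : (a <= i < a.+1)%N -> gain i = 0 by move=> ?; have -> : i = a by lia.
apply: iff_trans (argmin_Fmin_valley B (leqnSn a) pos zero neg t) _.
by split=> [|[]->]; lia.
Qed.

Variable n : nat.
Hypothesis tstarE : tstar lam SA = n%:Z.

Let qa_gt0_upto (t : nat) : (t <= n)%N -> 0 < qa t.
Proof. by rewrite -lez_nat -tstarE le_tstar // subr_gt0. Qed.

Lemma gain_gt0_upto (t i : nat) : (t <= n)%N -> v t < V -> (i <= t)%N -> 0 < gain i.
Proof.
move=> /qa_gt0_upto/gain_vth[w w_gt0 gain_t] lt_vV le_it.
by rewrite (lt_le_trans _ (gain_nonincr le_it)) // gain_t mulr_gt0 // subr_gt0.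
Qed.

Lemma gain_lt0_from (t i : nat) : (t <= n)%N -> V < v t -> (t <= i)%N -> gain i < 0.
Proof.
move=> /qa_gt0_upto/gain_vth[w w_gt0 gain_t] lt_Vv le_ti.
by rewrite (le_lt_trans (gain_nonincr le_ti)) // gain_t pmulr_rlt0 // subr_lt0.
Qed.

Lemma gain_bracket (th : nat) : (th <= n)%N ->
  vth lam theta SA (th%:Z - 1) < V -> V < v th ->
  (forall i, (i < th)%N -> 0 < gain i) /\ (forall i, (th <= i)%N -> gain i < 0).
Proof.
move=> le_thn lo hi; split; last by move=> i; apply: gain_lt0_from.
rewrite vth_pred in lo; case: th le_thn lo {hi} => // s le_sn lo i.
by rewrite ltnS; apply: gain_gt0_upto => //; apply: ltnW.
Qed.

Lemma myopic_above (B : nat) : v n < V ->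
  myopic_char lam theta SA V B (fun t => t = minn n.+1 B).
Proof.
move=> lt_vV; apply/myopic_char_argmin/argmin_Fmin_switch => i.
  exact: gain_gt0_upto (leqnn n) lt_vV.
move=> lt_ni; apply: gain_lt0_large.
by rewrite leNgt -le_tstar // tstarE lez_nat -ltnNge.
Qed.

Lemma myopic_at (B th : nat) : (th <= n)%N -> V = v th ->
  myopic_char lam theta SA V B (fun t => t = minn th.+1 B \/ t = minn th B).
Proof.
move=> le_thn V_eq.
have lt_kV : k < V by rewrite V_eq; case/andP: (vth_roots_bracket (qa_gt0_upto le_thn)).
have zero : gain th = 0.
  by have [w _ ->] := gain_vth (qa_gt0_upto le_thn); rewrite -V_eq subrr mulr0.
apply/myopic_char_argmin/argmin_Fmin_tie => // i lt_i; rewrite -zero; exact: gain_decr.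
Qed.

Lemma myopic_between (B th : nat) : (th <= n)%N ->
  vth lam theta SA (th%:Z - 1) < V -> V < v th ->
  myopic_char lam theta SA V B (fun t => t = minn th B).
Proof.
move=> le_thn lo hi; have [pos neg] := gain_bracket le_thn lo hi.
exact/myopic_char_argmin/argmin_Fmin_switch.
Qed.

Lemma bracket_unique (th th' : nat) : (th <= n)%N -> (th' <= n)%N ->
  vth lam theta SA (th%:Z - 1) < V -> V < v th ->
  vth lam theta SA (th'%:Z - 1) < V -> V < v th' -> th' = th.
Proof.
move=> le_thn le_th'n lo hi lo' hi'.
have [pos neg] := gain_bracket le_thn lo hi.
have [pos' neg'] := gain_bracket le_th'n lo' hi'.
case: (ltngtP th' th) => // lt.
- by have := pos _ lt; rewrite ltNge ltW ?neg'.
- by have := pos' _ lt; rewrite ltNge ltW ?neg.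
Qed.

Lemma bracket_exists : V <= v n -> (forall th, (th <= n)%N -> V <> v th) ->
  exists th : nat, [/\ (th <= n)%N, vth lam theta SA (th%:Z - 1) < V & V < v th].
Proof.
move=> le_Vv ne_Vv.
have ex_th : exists th, (th <= n)%N && (V < v th).
  by exists n; rewrite leqnn lt_neqAle le_Vv andbT; apply/eqP/ne_Vv.
case: (ex_minnP ex_th) => th /andP[le_thn hi] th_min; exists th; split=> //.
rewrite vth_pred; case: th le_thn hi th_min => // s le_thn hi th_min.
rewrite lt_neqAle leNgt; apply/andP; split.
  by apply/eqP=> eq_vV; apply: (ne_Vv s (ltnW le_thn)).
by apply/negP=> lt_Vv; have := th_min s; rewrite ltnW // lt_Vv ltnn => /(_ isT).
Qed.

End Myopic.

Lemma myopic_char_iff (R : realType) (lam theta SA V : R) (B : nat) (T T' : nat -> Prop) :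
  (forall t, T t <-> T' t) ->
  myopic_char lam theta SA V B T -> myopic_char lam theta SA V B T'.
Proof.
move=> TT' [minT Tmin]; split=> [t s /minT[/TT' ? ?] //|t /TT'].
exact: Tmin.
Qed.

Theorem theorem1 (R : realType) (SA cTX phi lam V : R) (B : nat) :
  0 < SA -> 0 < cTX -> 0 < phi -> (1 <= B)%N ->
  0 < lam -> lam <= lam_th (phi / cTX) SA ->
  0 < V -> V <= 1 ->
  let theta := phi / cTX in
  let ts := tstar lam SA in
  let v := vth lam theta SA in
  (* (i) *)
  (v ts < V ->
     myopic_char lam theta SA V B
       (fun t => t%:Z = Order.min (ts + 1) B%:Z)) /\
  (* (ii) *)
  (forall th : nat, th%:Z <= ts -> V = v th%:Z ->
     myopic_char lam theta SA V B
       (fun t => t = minn th.+1 B \/ t = minn th B)) /\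
  (* (iii) *)
  (V <= v ts -> (forall th : nat, th%:Z <= ts -> V <> v th%:Z) ->
     exists th : nat,
       [/\ th%:Z <= ts, v (th%:Z - 1) < V /\ V < v th%:Z,
           (forall th' : nat, th'%:Z <= ts ->
              v (th'%:Z - 1) < V -> V < v th'%:Z -> th' = th) &
           myopic_char lam theta SA V B (fun t => t = minn th B)]).
Proof.
move=> SA_gt0 cTX_gt0 phi_gt0 _ lam_gt0 _ V_gt0 _ theta ts v.
have theta_gt0 : 0 < theta by rewrite divr_gt0.
pose k := Num.sqrt (lam * theta).
have k_gt0 : 0 < k by rewrite sqrtr_gt0 mulr_gt0.
have thetaE : theta = k ^+ 2 / lam.
  by rewrite /k sqr_sqrtr ?(mulr_ge0 (ltW lam_gt0) (ltW theta_gt0)) // mulrAC divff ?mul1r ?gt_eqF.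
have [n tsE] : exists n : nat, tstar lam SA = n%:Z.
  by exists `|tstar lam SA|%N; rewrite gez0_abs // tstar_ge0.
rewrite /v /ts tsE thetaE.
split; [|split].
- move=> lt_vV; apply: (myopic_char_iff (T := fun t => t = minn n.+1 B)).
    by move=> t; split=> ?; lia.
  exact: myopic_above.
- by move=> th; rewrite lez_nat; exact: myopic_at.
- move=> le_Vv ne_Vv.
  have [|th [le_thn lo hi]] := bracket_exists V_gt0 le_Vv.
    by move=> th le_thn; apply: ne_Vv; rewrite lez_nat.
  exists th; split; rewrite ?lez_nat //; last exact: (myopic_between _ _ _ _ tsE).
  by move=> th'; rewrite lez_nat => le_th'n; apply: (bracket_unique _ _ _ _ tsE).
Qed.
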